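(* Let $(X,T)$ be a minimal flow on a compact Hausdorff space $X$ (no assumption on $T$ and no invariant measure assumed). Then $P(x)\subset\overline{V(x)}$ for every $x\in X$. If moreover $X$ is metrizable, then $P\subset V$.
   Context: $X$ compact Hausdorff, $T$ a topological group acting continuously on $X$; minimal means every orbit is dense. Proximal relation: $(x,y)\in P$ iff there are a net $\{t_i\}\subset T$ and $z\in X$ with $t_ix\to z$ and $t_iy\to z$. Veech relation: $(x,y)\in V$ iff there are $z\in X$ and a net $\{t_i\}\subset T$ with $t_ix\to z$ and $t_i^{-1}z\to y$. For a relation $R$, $R(x)=\{y:(x,y)\in R\}$. *)

From Stdlib Require Import Reals List.
Open Scope R_scope.

Record topology (X : Type) : Type := Topology {
  open : (X -> Prop) -> Prop;
  open_full : open (fun _ => True);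
  open_inter : forall U V, open U -> open V -> open (fun x => U x /\ V x);
  open_union : forall (I : Type) (F : I -> X -> Prop),
      (forall i, open (F i)) -> open (fun x => exists i, F i x)
}.
Arguments open {X} t U.

Definition closure {X : Type} (tX : topology X) (A : X -> Prop) (y : X) : Prop :=
  forall U, open tX U -> U y -> exists a, U a /\ A a.

Definition hausdorff {X : Type} (tX : topology X) : Prop :=
  forall x y, x <> y -> exists U V, open tX U /\ open tX V /\ U x /\ V y /\
    (forall z, U z -> V z -> False).

Definition compact {X : Type} (tX : topology X) : Prop :=
  forall (I : Type) (F : I -> X -> Prop),
    (forall i, open tX (F i)) -> (forall x, exists i, F i x) ->
    exists l : list I, forall x, exists i, In i l /\ F i x.

Definition prod_open {A B : Type} (tA : topology A) (tB : topology B)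
  (W : A * B -> Prop) : Prop :=
  forall p, W p -> exists U V, open tA U /\ open tB V /\ U (fst p) /\ V (snd p) /\
    (forall a b, U a -> V b -> W (a, b)).

Definition continuous {A B : Type} (tA : topology A) (tB : topology B) (f : A -> B) : Prop :=
  forall V, open tB V -> open tA (fun a => V (f a)).

Definition continuous2 {A B C : Type} (tA : topology A) (tB : topology B)
  (tC : topology C) (f : A -> B -> C) : Prop :=
  forall W, open tC W -> prod_open tA tB (fun p => W (f (fst p) (snd p))).

Definition is_topological_group {G : Type} (tG : topology G)
  (mul : G -> G -> G) (inv : G -> G) (e : G) : Prop :=
  (forall a b c, mul a (mul b c) = mul (mul a b) c) /\
  (forall a, mul e a = a) /\ (forall a, mul a e = a) /\
  (forall a, mul (inv a) a = e) /\ (forall a, mul a (inv a) = e) /\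
  continuous2 tG tG tG mul /\ continuous tG tG inv.

Definition is_continuous_action {G X : Type} (tG : topology G) (tX : topology X)
  (mul : G -> G -> G) (e : G) (act : G -> X -> X) : Prop :=
  (forall x, act e x = x) /\
  (forall s t x, act (mul s t) x = act s (act t x)) /\
  continuous2 tG tX tX act.

Definition minimal {G X : Type} (tX : topology X) (act : G -> X -> X) : Prop :=
  forall x y, closure tX (fun z => exists t, z = act t x) y.

Record directed : Type := Directed {
  dset :> Type;
  dle : dset -> dset -> Prop;
  dle_refl : forall i, dle i i;
  dle_trans : forall i j k, dle i j -> dle j k -> dle i k;
  dle_upper : forall i j, exists k, dle i k /\ dle j k;
  dinhab : dset
}.

Definition net_converges {X : Type} (tX : topology X) {D : directed}
  (s : D -> X) (z : X) : Prop :=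
  forall U, open tX U -> U z -> exists i0 : D, forall i, dle D i0 i -> U (s i).

Definition proximal {G X : Type} (tX : topology X) (act : G -> X -> X) (x y : X) : Prop :=
  exists (D : directed) (t : D -> G) (z : X),
    net_converges tX (fun i => act (t i) x) z /\
    net_converges tX (fun i => act (t i) y) z.

Definition veech {G X : Type} (tX : topology X) (inv : G -> G) (act : G -> X -> X)
  (x y : X) : Prop :=
  exists (D : directed) (t : D -> G) (z : X),
    net_converges tX (fun i => act (t i) x) z /\
    net_converges tX (fun i => act (inv (t i)) z) y.

Definition metrizable {X : Type} (tX : topology X) : Prop :=
  exists d : X -> X -> R,
    (forall x y, 0 <= d x y) /\ (forall x y, d x y = 0 <-> x = y) /\
    (forall x y, d x y = d y x) /\ (forall x y z, d x z <= d x y + d y z) /\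
    (forall U, open tX U <->
       (forall x, U x -> exists eps, 0 < eps /\ forall y, d x y < eps -> U y)).

From Pilot Require Import Defs.
From Stdlib Require Import Reals List Lra Lia Classical ClassicalEpsilon
  FunctionalExtensionality PropExtensionality.
(* Re-import so that [closure], [compact], [continuous] refer to Defs, not Reals. *)
Import Defs.
Open Scope R_scope.

(* Let (x, y) be proximal and fix open neighbourhoods W_n of y.  Minimality
   turns proximality into "simultaneous entry": every nonempty open set Q
   contains t x and t y for some t.  Using this and regularity of compact
   Hausdorff spaces we build, by recursion, nonempty open sets
   X = O_0, O_1, ... and elements t_n with t_n x in O_n and
   closure(O_(n+1)) contained in O_n and in t_n W_n.  A cluster point z of
   (t_n x) lies in every closure(O_(n+1)), hence t_n^-1 z is in W_n.
   Passing to a subnet along which t_n x converges to z gives the key lemma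
   [approximate_veech].  With constant W_n = W a further subnet makes
   t^-1 z converge in closure(W), which gives P(x) in the closure of V(x);
   with W_n the balls of radius 1/(n+1) of a compatible metric, t^-1 z
   converges to y itself, which gives P in V. *)

Lemma open_ext {X} (tX : topology X) (U V : X -> Prop) :
  (forall x, U x <-> V x) -> open tX U -> open tX V.
Proof.
  intros HUV HU.
  replace V with U; [exact HU |].
  extensionality x. apply propositional_extensionality, HUV.
Qed.

Lemma open_local {X} (tX : topology X) (S : X -> Prop) :
  (forall x, S x -> exists V, open tX V /\ V x /\ forall y, V y -> S y) ->
  open tX S.
Proof.
  intros Hloc.
  apply (open_ext tX
    (fun x => exists V : {V : X -> Prop | open tX V /\ forall y, V y -> S y},
       proj1_sig V x)).
  - intros x; split.
    + intros [V Vx]. exact (proj2 (proj2_sig V) x Vx).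
    + intros Sx. destruct (Hloc x Sx) as [V [HV [Vx HVS]]].
      exists (exist _ V (conj HV HVS)). exact Vx.
  - apply open_union. intros V. exact (proj1 (proj2_sig V)).
Qed.

Lemma open_list_inter {X} (tX : topology X) {I} (l : list I) (F : I -> X -> Prop) :
  (forall i, In i l -> open tX (F i)) -> open tX (fun z => forall i, In i l -> F i z).
Proof.
  induction l as [|a l IH]; intros Hopen.
  - apply (open_ext tX (fun _ => True)); [| apply open_full].
    intros z; split; [intros _ i [] | auto].
  - apply (open_ext tX (fun z => F a z /\ forall i, In i l -> F i z)).
    + intros z; split.
      * intros [Ha Hl] i [<- | Hi]; auto.
      * intros Hz; split; [apply Hz; left | intros i Hi; apply Hz; right]; auto.
    + apply open_inter; [apply Hopen; left; reflexivity |].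
      apply IH. intros i Hi. apply Hopen. right. exact Hi.
Qed.

Lemma closure_incl {X} (tX : topology X) (S : X -> Prop) w : S w -> closure tX S w.
Proof. intros Sw U _ Uw. exists w; auto. Qed.

Lemma compact_hausdorff_regular {X} (tX : topology X) :
  compact tX -> hausdorff tX ->
  forall A p, open tX A -> A p ->
  exists B, open tX B /\ B p /\ forall w, closure tX B w -> A w.
Proof.
  intros Hc Hh A p HA Ap.
  assert (Hsep : forall q : {q | ~ A q}, exists UV : (X -> Prop) * (X -> Prop),
     open tX (fst UV) /\ open tX (snd UV) /\ fst UV p /\ snd UV (proj1_sig q) /\
     forall z, fst UV z -> snd UV z -> False).
  { intros [q Hq]. assert (Hpq : p <> q) by (intros ->; auto).
    destruct (Hh p q Hpq) as [U [V HUV]]. exists (U, V). exact HUV. }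
  destruct (choice _ Hsep) as [f Hf].
  pose (cover := fun o => match o with None => A | Some q => snd (f q) end).
  destruct (Hc _ cover) as [l Hl].
  - intros [q|]; simpl; [apply Hf | exact HA].
  - intros x. destruct (classic (A x)) as [Ax | nAx].
    + exists None. exact Ax.
    + exists (Some (exist _ x nAx)). apply Hf.
  - pose (near_p := fun o => match o with None => fun _ => True | Some q => fst (f q) end).
    exists (fun z => forall o, In o l -> near_p o z). split; [| split].
    + apply open_list_inter. intros [q|] _; simpl; [apply Hf | apply open_full].
    + intros [q|] _; simpl; [apply Hf | exact I].
    + intros w Hw. destruct (Hl w) as [[q|] [Ho Fo]]; [| exact Fo].
      exfalso. destruct (Hw (snd (f q))) as [a [Ha Ba]]; [apply Hf | exact Fo |].
      apply (proj2 (proj2 (proj2 (proj2 (Hf q)))) a); [exact (Ba (Some q) Ho) | exact Ha].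
Qed.

Definition cluster_point {X} (tX : topology X) {D : directed} (s : D -> X) (z : X) :=
  forall U, open tX U -> U z -> forall i0, exists i, dle D i0 i /\ U (s i).

Definition cofinal {D D' : directed} (h : D' -> D) :=
  forall i0, exists j0, forall j, dle D' j0 j -> dle D i0 (h j).

Lemma upper_bound_list (D : directed) {A} (g : A -> D) (l : list A) :
  exists k, forall a, In a l -> dle D (g a) k.
Proof.
  induction l as [|a l [k Hk]].
  - exists (dinhab D). intros a [].
  - destruct (dle_upper D (g a) k) as [m [Ham Hkm]]. exists m.
    intros b [<- | Hb]; [exact Ham | exact (dle_trans D _ _ _ (Hk b Hb) Hkm)].
Qed.

Lemma compact_cluster_point {X} (tX : topology X) :
  compact tX -> forall (D : directed) (s : D -> X), exists z, cluster_point tX s z.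
Proof.
  intros Hc D s. apply NNPP; intros Hnone.
  assert (Havoid : forall w, exists p : (X -> Prop) * D, open tX (fst p) /\
            fst p w /\ forall i, dle D (snd p) i -> ~ fst p (s i)).
  { intros w. apply NNPP; intros Hw. apply Hnone. exists w. intros U HU Uw i0.
    apply NNPP; intros Hi0. apply Hw. exists (U, i0). simpl.
    split; [exact HU | split; [exact Uw |]]. intros i Hi Ui. apply Hi0. exists i; auto. }
  destruct (choice _ Havoid) as [f Hf].
  destruct (Hc X (fun w => fst (f w))) as [l Hl].
  - intros w. apply Hf.
  - intros w. exists w. apply Hf.
  - destruct (upper_bound_list D (fun w => snd (f w)) l) as [k Hk].
    destruct (Hl (s k)) as [w [Hw Fw]].
    exact (proj2 (proj2 (Hf w)) k (Hk w Hw) Fw).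
Qed.

(* Index set of a subnet: pairs (index, open neighbourhood of z), ordered by
   the index and by reverse inclusion of the neighbourhood. *)
Definition nbhd_index {X} (tX : topology X) (D : directed) (z : X) : Type :=
  {p : D * (X -> Prop) | open tX (snd p) /\ snd p z}.

Definition nbhd_le {X} (tX : topology X) (D : directed) (z : X)
  (a b : nbhd_index tX D z) : Prop :=
  dle D (fst (proj1_sig a)) (fst (proj1_sig b)) /\
  forall w, snd (proj1_sig b) w -> snd (proj1_sig a) w.

Lemma nbhd_le_refl {X} (tX : topology X) D z : forall a, nbhd_le tX D z a a.
Proof. intros a. split; [apply dle_refl | auto]. Qed.

Lemma nbhd_le_trans {X} (tX : topology X) D z : forall a b c,
  nbhd_le tX D z a b -> nbhd_le tX D z b c -> nbhd_le tX D z a c.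
Proof. intros a b c [Hab Hab'] [Hbc Hbc']. split; [eapply dle_trans; eauto | auto]. Qed.

Lemma nbhd_le_upper {X} (tX : topology X) D z : forall a b,
  exists c, nbhd_le tX D z a c /\ nbhd_le tX D z b c.
Proof.
  intros [[i U] [HU Uz]] [[j V] [HV Vz]].
  destruct (dle_upper D i j) as [k [Hik Hjk]].
  exists (exist _ (k, fun w => U w /\ V w) (conj (open_inter X tX U V HU HV) (conj Uz Vz))).
  split; split; simpl; auto; intros w [? ?]; auto.
Qed.

Definition nbhd_directed {X} (tX : topology X) (D : directed) (z : X) : directed :=
  Directed (nbhd_index tX D z) (nbhd_le tX D z) (nbhd_le_refl tX D z)
    (nbhd_le_trans tX D z) (nbhd_le_upper tX D z)
    (exist _ (dinhab D, fun _ => True) (conj (open_full X tX) I)).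

Lemma cluster_point_subnet {X} (tX : topology X) (D : directed) (s : D -> X) (z : X) :
  cluster_point tX s z ->
  exists (D' : directed) (h : D' -> D),
    net_converges tX (fun j => s (h j)) z /\ cofinal h.
Proof.
  intros Hcl.
  assert (Hpick : forall j : nbhd_index tX D z,
            exists i, dle D (fst (proj1_sig j)) i /\ snd (proj1_sig j) (s i)).
  { intros [[i U] [HU Uz]]. exact (Hcl U HU Uz i). }
  destruct (choice _ Hpick) as [h Hh].
  exists (nbhd_directed tX D z), h. split.
  - intros U HU Uz. exists (exist _ (dinhab D, U) (conj HU Uz) : nbhd_index tX D z).
    intros j [_ Hj]. apply Hj, Hh.
  - intros i0.
    exists (exist _ (i0, fun _ => True) (conj (open_full X tX) I) : nbhd_index tX D z).
    intros j [Hj _]. exact (dle_trans D _ _ _ Hj (proj1 (Hh j))).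
Qed.

Lemma converges_cofinal {X} (tX : topology X) (D D' : directed) (s : D -> X)
  (h : D' -> D) z :
  net_converges tX s z -> cofinal h -> net_converges tX (fun j => s (h j)) z.
Proof.
  intros Hs Hh U HU Uz. destruct (Hs U HU Uz) as [i0 Hi0].
  destruct (Hh i0) as [j0 Hj0]. exists j0. intros j Hj. apply Hi0, Hj0, Hj.
Qed.

Definition nat_directed : directed :=
  Directed nat le (fun i => le_n i) (fun i j k => Nat.le_trans i j k)
    (fun i j => ex_intro _ (i + j)%nat (conj (Nat.le_add_r i j)
                  (Nat.le_add_l j i))) 0%nat.

Section ProximalVeech.

Variables (X G : Type) (tX : topology X).
Variables (mul : G -> G -> G) (inv : G -> G) (act : G -> X -> X).

Hypothesis X_compact : compact tX.
Hypothesis X_hausdorff : hausdorff tX.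
Hypothesis act_continuous : forall s, continuous tX tX (act s).
Hypothesis act_mul : forall s t w, act (mul s t) w = act s (act t w).
Hypothesis act_inv : forall t w, act (inv t) (act t w) = w.
Hypothesis X_minimal : minimal tX act.

Definition nonempty_open := {Q : X -> Prop | open tX Q /\ exists a, Q a}.

(* A proximal pair enters every nonempty open set simultaneously: move the
   common limit z of (t_i x, t_i y) into Q using a dense orbit. *)
Lemma proximal_simultaneous_entry x y :
  proximal tX act x y ->
  forall Q, open tX Q -> (exists a, Q a) -> exists t, Q (act t x) /\ Q (act t y).
Proof.
  intros [D [t [z [Hx Hy]]]] Q HQ [a Qa].
  destruct (X_minimal z a Q HQ Qa) as [b [Qb [s ->]]].
  pose proof (act_continuous s Q HQ) as HsQ.
  destruct (Hx _ HsQ Qb) as [i1 Hi1]. destruct (Hy _ HsQ Qb) as [i2 Hi2].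
  destruct (dle_upper D i1 i2) as [k [H1 H2]].
  exists (mul s (t k)). rewrite !act_mul. split; [apply Hi1 | apply Hi2]; auto.
Qed.

Lemma refinement_step x y :
  proximal tX act x y -> forall W, open tX W -> W y ->
  forall Q : nonempty_open, exists p : G * nonempty_open,
    proj1_sig Q (act (fst p) x) /\
    forall w, closure tX (proj1_sig (snd p)) w ->
      proj1_sig Q w /\ W (act (inv (fst p)) w).
Proof.
  intros Hp W HW Wy [Q [HQ HQne]]. simpl.
  destruct (proximal_simultaneous_entry x y Hp Q HQ HQne) as [t [Qtx Qty]].
  pose (A := fun w => Q w /\ W (act (inv t) w)).
  assert (HA : open tX A) by (apply open_inter; [exact HQ | exact (act_continuous _ W HW)]).
  destruct (compact_hausdorff_regular tX X_compact X_hausdorff A (act t y) HA)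
    as [B [HB [Bty HBA]]].
  { split; [exact Qty | rewrite act_inv; exact Wy]. }
  exists (t, exist _ B (conj HB (ex_intro _ _ Bty))). split; [exact Qtx | exact HBA].
Qed.

Lemma nested_sequence x y (Wn : nat -> X -> Prop) :
  proximal tX act x y -> (forall n, open tX (Wn n)) -> (forall n, Wn n y) ->
  exists (t : nat -> G) (O : nat -> X -> Prop),
    (forall n, O n (act (t n) x)) /\
    (forall n w, closure tX (O (S n)) w -> O n w /\ Wn n (act (inv (t n)) w)).
Proof.
  intros Hp HWn Wny.
  destruct (choice _ (fun n => choice _
              (refinement_step x y Hp (Wn n) (HWn n) (Wny n)))) as [step Hstep].
  pose (whole := exist _ (fun _ => True) (conj (open_full X tX) (ex_intro _ x I))
                   : nonempty_open).
  pose (O := fix O n := match n with 0%nat => whole | S m => snd (step m (O m)) end).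
  exists (fun n => fst (step n (O n))), (fun n => proj1_sig (O n)). split.
  - intros n. exact (proj1 (Hstep n (O n))).
  - intros n. exact (proj2 (Hstep n (O n))).
Qed.

Lemma approximate_veech x y (Wn : nat -> X -> Prop) :
  proximal tX act x y -> (forall n, open tX (Wn n)) -> (forall n, Wn n y) ->
  exists (D : directed) (h : D -> nat) (t : D -> G) (z : X),
    net_converges tX (fun j => act (t j) x) z /\
    (forall j, Wn (h j) (act (inv (t j)) z)) /\
    (forall N, exists j0, forall j, dle D j0 j -> (N <= h j)%nat).
Proof.
  intros Hp HWn Wny.
  destruct (nested_sequence x y Wn Hp HWn Wny) as [t [O [HtO HO]]].
  assert (O_decreasing : forall n m, (n <= m)%nat -> forall w, O m w -> O n w).
  { intros n m Hnm. induction Hnm as [|m _ IH]; auto.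
    intros w Hw. apply IH, (HO m w), closure_incl, Hw. }
  destruct (compact_cluster_point tX X_compact nat_directed (fun n => act (t n) x))
    as [z Hz].
  assert (Hz_closure : forall n, closure tX (O n) z).
  { intros n U HU Uz. destruct (Hz U HU Uz n) as [m [Hnm Um]].
    exists (act (t m) x). split; [exact Um | exact (O_decreasing n m Hnm _ (HtO m))]. }
  destruct (cluster_point_subnet tX nat_directed _ z Hz) as [D [h [Hconv Hcof]]].
  exists D, h, (fun j => t (h j)), z. split; [exact Hconv | split; [| exact Hcof]].
  intros j. exact (proj2 (HO (h j) z (Hz_closure (S (h j))))).
Qed.

Theorem proximal_in_closure_veech x y :
  proximal tX act x y -> closure tX (veech tX inv act x) y.
Proof.
  intros Hp W HW Wy.
  destruct (compact_hausdorff_regular tX X_compact X_hausdorff W y HW Wy)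
    as [W1 [HW1 [W1y HW1W]]].
  destruct (approximate_veech x y (fun _ => W1) Hp (fun _ => HW1) (fun _ => W1y))
    as [D [_ [t [z [Hconv [HW1t _]]]]]].
  destruct (compact_cluster_point tX X_compact D (fun j => act (inv (t j)) z)) as [y' Hy'].
  exists y'. split.
  - apply HW1W. intros U HU Uy'. destruct (Hy' U HU Uy' (dinhab D)) as [j [_ Uj]].
    exists (act (inv (t j)) z). split; [exact Uj | apply HW1t].
  - destruct (cluster_point_subnet tX D _ y' Hy') as [D2 [h2 [Hconv2 Hcof2]]].
    exists D2, (fun k => t (h2 k)), z.
    split; [exact (converges_cofinal tX D D2 _ h2 z Hconv Hcof2) | exact Hconv2].
Qed.

(* Second statement: for a metrizable space every proximal pair is a Veech
   pair; take W_n to be the ball of radius 1/(n+1) around y. *)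
Theorem proximal_veech_metrizable :
  metrizable tX -> forall x y, proximal tX act x y -> veech tX inv act x y.
Proof.
  intros [d [_ [Hdeq [_ [Htri Hopen]]]]] x y Hp.
  pose (ball := fun (n : nat) w => d y w < / INR (S n)).
  assert (ball_open : forall n, open tX (ball n)).
  { intros n. apply Hopen. intros w Hw. exists (/ INR (S n) - d y w).
    split; [unfold ball in Hw; lra |].
    intros v Hv. unfold ball. specialize (Htri y w v). lra. }
  assert (ball_center : forall n, ball n y).
  { intros n. unfold ball. rewrite (proj2 (Hdeq y y) eq_refl).
    apply Rinv_0_lt_compat, lt_0_INR, Nat.lt_0_succ. }
  destruct (approximate_veech x y ball Hp ball_open ball_center)
    as [D [h [t [z [Hconv [Hball Hcof]]]]]].
  exists D, t, z. split; [exact Hconv |].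
  intros U HU Uy. destruct (proj1 (Hopen U) HU y Uy) as [eps [Heps HUeps]].
  destruct (archimed_cor1 eps Heps) as [N [HN HN0]].
  destruct (Hcof N) as [j0 Hj0]. exists j0. intros j Hj.
  apply HUeps. specialize (Hball j). unfold ball in Hball.
  assert (/ INR (S (h j)) <= / INR N).
  { apply Rinv_le_contravar; [apply lt_0_INR; lia | apply le_INR; specialize (Hj0 j Hj); lia]. }
  lra.
Qed.

End ProximalVeech.

Lemma continuous2_right {A B C} (tA : topology A) (tB : topology B) (tC : topology C)
  (f : A -> B -> C) : continuous2 tA tB tC f -> forall a, continuous tB tC (f a).
Proof.
  intros Hf a Q HQ. apply open_local. intros w Qw.
  destruct (Hf Q HQ (a, w) Qw) as [U [V [_ [HV [Ua [Vw HUV]]]]]].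
  exists V. split; [exact HV | split; [exact Vw |]]. intros v Vv. exact (HUV a v Ua Vv).
Qed.

Theorem mainTheorem8 (X G : Type) (tX : topology X) (tG : topology G)
  (mul : G -> G -> G) (inv : G -> G) (e : G) (act : G -> X -> X) :
  compact tX -> hausdorff tX ->
  is_topological_group tG mul inv e ->
  is_continuous_action tG tX mul e act ->
  minimal tX act ->
  (forall x y, proximal tX act x y -> closure tX (veech tX inv act x) y) /\
  (metrizable tX -> forall x y, proximal tX act x y -> veech tX inv act x y).
Proof.
  intros Hc Hh [_ [_ [_ [Hinv _]]]] [Hid [Hmul Hcont]] Hm.
  pose proof (continuous2_right tG tX tX act Hcont) as Hact.
  assert (Hact_inv : forall t w, act (inv t) (act t w) = w).
  { intros t w. rewrite <- Hmul, Hinv, Hid. reflexivity. }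
  split.
  - exact (proximal_in_closure_veech X G tX mul inv act Hc Hh Hact Hmul Hact_inv Hm).
  - exact (proximal_veech_metrizable X G tX mul inv act Hc Hh Hact Hmul Hact_inv Hm).
Qed.
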